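(* Consider a single user with $N$ movable antennas at positions $\mathbf w=[w_1,\dots,w_N]^T$, power $P>0$, aperture $W>0$, $L$ propagation paths, and channel $\mathbf G(\mathbf w)=\sqrt{MN}\,\mathbf A_{\mathrm R}\boldsymbol\Gamma\mathbf A_{\mathrm T}^H(\mathbf w)\in\mathbb C^{M\times N}$. Let $\mathcal W=\{\mathbf w\in\mathbb R^N:0\le w_n\le W\ \forall n,\ w_n\ne w_{n'}\ \forall n\ne n'\}$. Consider the problems $$\text{(A)}:\ \max_{\mathbf Q,\mathbf w}\ \log|\mathbf G(\mathbf w)\mathbf Q\mathbf G^H(\mathbf w)+\mathbf I_M|\ \text{ s.t. } \mathbf Q\in\mathbb C^{N\times N},\ \mathbf Q\succeq\mathbf 0,\ \mathrm{tr}(\mathbf Q)\le P,\ \mathbf w\in\mathcal W,$$ $$\text{(B)}:\ \max_{\mathbf F,\mathbf w}\ \log|\mathbf G^H(\mathbf w)\mathbf F\mathbf G(\mathbf w)+\mathbf I_N|\ \text{ s.t. } \mathbf F\in\mathbb C^{M\times M},\ \mathbf F\succeq\mathbf 0,\ \mathrm{tr}(\mathbf F)\le P,\ \mathbf w\in\mathcal W,$$ and, for fixed $\mathbf w$, the subproblems (A$_{\mathbf w}$): maximize the objective of (A) over $\mathbf Q\succeq\mathbf 0$, $\mathrm{tr}(\mathbf Q)\le P$; and (B$_{\mathbf w}$): maximize the objective of (B) over $\mathbf F\succeq\mathbf 0$, $\mathrm{tr}(\mathbf F)\le P$. Suppose $(\mathbf Q^*,\mathbf w^* )$ is an optimal solution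 of (A) and $(\mathbf F^\divideontimes,\mathbf w^\divideontimes)$ is an optimal solution of (B). Then: 1. $\log|\mathbf G(\mathbf w^* )\mathbf Q^*\mathbf G^H(\mathbf w^* )+\mathbf I_M|=\log|\mathbf G^H(\mathbf w^\divideontimes)\mathbf F^\divideontimes\mathbf G(\mathbf w^\divideontimes)+\mathbf I_N|$. 2. If $\mathbf F^*$ is an optimal solution of (B$_{\mathbf w^*}$), then $(\mathbf F^*,\mathbf w^* )$ is an optimal solution of (B), and $\log|\mathbf G^H(\mathbf w^* )\mathbf F^*\mathbf G(\mathbf w^* )+\mathbf I_N|=\log|\mathbf G^H(\mathbf w^\divideontimes)\mathbf F^\divideontimes\mathbf G(\mathbf w^\divideontimes)+\mathbf I_N|$. 3. If $\mathbf Q^\divideontimes$ is an optimal solution of (A$_{\mathbf w^\divideontimes}$), then $(\mathbf Q^\divideontimes,\mathbf w^\divideontimes)$ is an optimal solution of (A), and $\log|\mathbf G(\mathbf w^* )\mathbf Q^*\mathbf G^H(\mathbf w^* )+\mathbf I_M|=\log|\mathbf G(\mathbf w^\divideontimes)\mathbf Q^\divideontimes\mathbf G^H(\mathbf w^\divideontimes)+\mathbf I_M|$.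
   Context: The base station has an $M$-antenna uniform linear array with spacing $d=\lambda/2$ ($\lambda$ the wavelength). The $L$ paths have complex gains $\gamma_l$, angles of arrival $\beta_l\in[0,\pi]$ and angles of departure $\theta_l\in[0,\pi]$. $\mathbf a_{\mathrm R}(\beta)=\frac1{\sqrt M}[1,e^{-j\frac{2\pi}{\lambda}d\cos\beta},\dots,e^{-j\frac{2\pi}{\lambda}(M-1)d\cos\beta}]^T$, $\mathbf a_{\mathrm T}(\theta,\mathbf w)=\frac1{\sqrt N}[e^{-j\frac{2\pi}{\lambda}w_1\cos\theta},\dots,e^{-j\frac{2\pi}{\lambda}w_N\cos\theta}]^T$, $\mathbf A_{\mathrm R}=[\mathbf a_{\mathrm R}(\beta_l)]_{l=1}^L\in\mathbb C^{M\times L}$, $\mathbf A_{\mathrm T}(\mathbf w)=[\mathbf a_{\mathrm T}(\theta_l,\mathbf w)]_{l=1}^L\in\mathbb C^{N\times L}$, $\boldsymbol\Gamma=\mathrm{diag}(\gamma_1,\dots,\gamma_L)$. $|\cdot|$ denotes determinant. *)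

From HB Require Import structures.
From mathcomp Require Import all_boot all_order all_algebra.
From mathcomp Require Import complex.
From mathcomp Require Import reals exp trigo.
Set Implicit Arguments. Unset Strict Implicit. Unset Printing Implicit Defensive.
Import Order.TTheory GRing.Theory Num.Theory.
Local Open Scope ring_scope.

Section MA.
Variable R : realType.
Local Notation C := (complex R).

Definition rC (x : R) : C := Complex x 0.

Definition expj (x : R) : C := Complex (cos x) (sin x).

Definition hermT m n (A : 'M[C]_(m, n)) : 'M[C]_(n, m) := (map_mx Num.conj A)^T.

Definition psd n (A : 'M[C]_n) : Prop :=
  hermT A = A /\ forall x : 'cV[C]_n, 0 <= (hermT x *m A *m x) 0 0.

(* log of a determinant (the determinants considered are real and >= 1);
   natural logarithm of the real part of the determinant *)
Definition logdet n (A : 'M[C]_n) : R := ln (complex.Re (\det A)).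

(* Receive steering matrix A_R = [a_R(beta_l)]_l, d = lambda/2 *)
Definition A_R (M L : nat) (lam : R) (beta : 'I_L -> R) : 'M[C]_(M, L) :=
  \matrix_(m < M, l < L)
    (rC (Num.sqrt (M%:R))^-1 *
     expj (- (2 * pi / lam) * (m%:R * (lam / 2)) * cos (beta l))).

Definition A_T (N L : nat) (lam : R) (theta : 'I_L -> R) (w : 'I_N -> R)
  : 'M[C]_(N, L) :=
  \matrix_(n < N, l < L)
    (rC (Num.sqrt (N%:R))^-1 *
     expj (- (2 * pi / lam) * w n * cos (theta l))).

Definition Gam (L : nat) (gamma : 'I_L -> C) : 'M[C]_L :=
  diag_mx (\row_l gamma l).

Definition chanG (M N L : nat) (lam : R) (gamma : 'I_L -> C)
  (beta theta : 'I_L -> R) (w : 'I_N -> R) : 'M[C]_(M, N) :=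
  rC (Num.sqrt ((M * N)%:R)) *:
    (A_R M lam beta *m Gam gamma *m hermT (A_T lam theta w)).

Definition posW (N : nat) (W : R) (w : 'I_N -> R) : Prop :=
  (forall n, 0 <= w n <= W) /\ (forall n n', n != n' -> w n != w n').

Definition covFeas n (P : R) (Q : 'M[C]_n) : Prop :=
  psd Q /\ \tr Q <= rC P.

Definition objA M N (G : 'M[C]_(M, N)) (Q : 'M[C]_N) : R :=
  logdet (G *m Q *m hermT G + 1%:M).
Definition objB M N (G : 'M[C]_(M, N)) (F : 'M[C]_M) : R :=
  logdet (hermT G *m F *m G + 1%:M).

Definition optA M N (W P : R) (G : ('I_N -> R) -> 'M[C]_(M, N))
  (Q : 'M[C]_N) (w : 'I_N -> R) : Prop :=
  (covFeas P Q /\ posW W w) /\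
  forall Q' w', covFeas P Q' -> posW W w' -> objA (G w') Q' <= objA (G w) Q.

Definition optB M N (W P : R) (G : ('I_N -> R) -> 'M[C]_(M, N))
  (F : 'M[C]_M) (w : 'I_N -> R) : Prop :=
  (covFeas P F /\ posW W w) /\
  forall F' w', covFeas P F' -> posW W w' -> objB (G w') F' <= objB (G w) F.

Definition optAw M N (P : R) (G : 'M[C]_(M, N)) (Q : 'M[C]_N) : Prop :=
  covFeas P Q /\ forall Q', covFeas P Q' -> objA G Q' <= objA G Q.

Definition optBw M N (P : R) (G : 'M[C]_(M, N)) (F : 'M[C]_M) : Prop :=
  covFeas P F /\ forall F', covFeas P F' -> objB G F' <= objB G F.

End MA.

From HB Require Import structures.
From mathcomp Require Import all_boot all_order all_algebra.
From mathcomp Require Import complex.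
From mathcomp Require Import reals exp trigo.
From mathcomp Require Import spectral.
Import Order.TTheory GRing.Theory Num.Theory.
Local Open Scope ring_scope.
Set Implicit Arguments. Unset Strict Implicit.

(* For a fixed channel matrix G, the problems (A_w) and (B_w) have the same
   optimal value (MIMO reciprocity): writing H = G^H G and S for the
   pseudo-inverse square root of H, every feasible Q yields the feasible
   F = (G S) Q (G S)^H with tr F <= tr Q and, by Sylvester's identity
   det(I + AB) = det(I + BA), the same objective value.  Since (B_w) for G
   is (A_w) for G^H, values also transfer from B to A.  Hence, taking
   maxima over the antenna positions, (A) and (B) have the same optimal
   value, and a position optimal for one problem is optimal for the
   other. *)

Lemma det_mulmxD1C (R : comPzRingType) m n (A : 'M[R]_(m, n)) (B : 'M[R]_(n, m)) :
  \det (A *m B + 1%:M) = \det (B *m A + 1%:M).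
Proof.
have e1 : block_mx (A *m B + 1%:M) (- A) 0 (1%:M : 'M_n) *m
          block_mx 1%:M 0 B 1%:M = block_mx 1%:M (- A) B 1%:M.
  rewrite mulmx_block ?mulmx1 ?mul1mx ?mulmx0 ?mul0mx ?addr0 ?add0r.
  by rewrite mulNmx addrAC addrN add0r.
have e2 : block_mx (1%:M : 'M_m) 0 B 1%:M *m
          block_mx 1%:M (- A) 0 (B *m A + 1%:M) = block_mx 1%:M (- A) B 1%:M.
  rewrite mulmx_block ?mulmx1 ?mul1mx ?mulmx0 ?mul0mx ?addr0 ?add0r.
  by rewrite mulmxN addrA addNr add0r.
have := congr1 determinant e1; rewrite -{}e2 !det_mulmx det_ublock det_lblock.
by rewrite det_ublock !det1 !mulr1 !mul1r.
Qed.

Lemma divr_sqrtC (C : numClosedFieldType) (x : C) : x / sqrtC x = sqrtC x.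
Proof.
rewrite -{1}(sqrtCK x); have [->|nz_x] := eqVneq (sqrtC x) 0.
  by rewrite invr0 mulr0.
by rewrite expr2 mulfK.
Qed.

(* optAw/optBw and optA/optB are, up to conversion, instances of [maximizes]
   and [maximizes2]. *)
Definition maximizes {d} {T : porderType d} {X : Type}
    (feas : X -> Prop) (h : X -> T) (x : X) :=
  feas x /\ forall x', feas x' -> (h x' <= h x)%O.

Definition maximizes2 {d} {T : porderType d} {X Pos : Type}
    (feas : X -> Prop) (feasPos : Pos -> Prop) (h : Pos -> X -> T) x w :=
  (feas x /\ feasPos w) /\
  forall x' w', feas x' -> feasPos w' -> (h w' x' <= h w x)%O.

Section JointMaximization.
Context {d : Order.disp_t} {T : porderType d} {Pos X Y : Type}.
Variables (feasPos : Pos -> Prop) (feasX : X -> Prop) (feasY : Y -> Prop).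
Variables (f : Pos -> X -> T) (g : Pos -> Y -> T).
Hypothesis f_le_g : forall w x, feasX x -> exists2 y, feasY y & (f w x <= g w y)%O.
Hypothesis g_le_f : forall w y, feasY y -> exists2 x, feasX x & (g w y <= f w x)%O.

Lemma maximizes2_eq xs ws yx wx :
  maximizes2 feasX feasPos f xs ws -> maximizes2 feasY feasPos g yx wx ->
  f ws xs = g wx yx.
Proof.
move=> [[xs_feas ws_feas] xs_opt] [[yx_feas wx_feas] yx_opt].
apply/le_anti/andP; split.
  have [y y_feas /le_trans] := f_le_g ws xs_feas; apply.
  exact: yx_opt.
have [x x_feas /le_trans] := g_le_f wx yx_feas; apply.
exact: xs_opt.
Qed.

Lemma maximizes_maximizes2 xs ws yx wx ys :
  maximizes2 feasX feasPos f xs ws -> maximizes2 feasY feasPos g yx wx ->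
  maximizes feasY (g ws) ys ->
  maximizes2 feasY feasPos g ys ws /\ g ws ys = g wx yx.
Proof.
move=> xs_opt yx_opt [ys_feas ys_max].
have [[xs_feas ws_feas] _] := xs_opt; have [_ yx_max] := yx_opt.
have obj_eq : g ws ys = g wx yx.
  apply/le_anti/andP; split; first exact: yx_max.
  rewrite -(maximizes2_eq xs_opt yx_opt).
  have [y y_feas /le_trans] := f_le_g ws xs_feas; apply.
  exact: ys_max.
split; last exact: obj_eq.
split=> [|y' w' y'_feas w'_feas]; first by split.
by rewrite obj_eq; exact: yx_max.
Qed.

End JointMaximization.

Section ComplexMatrix.
Variable R : realType.
Local Notation C := (complex R).

Lemma hermT_mul m n p (A : 'M[C]_(m, n)) (B : 'M[C]_(n, p)) :
  hermT (A *m B) = hermT B *m hermT A.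
Proof. by rewrite /hermT map_mxM trmx_mul. Qed.

Lemma hermTK m n (A : 'M[C]_(m, n)) : hermT (hermT A) = A.
Proof. by apply/matrixP => i j; rewrite /hermT !mxE conjCK. Qed.

Lemma hermT_diag n (d : 'rV[C]_n) :
  hermT (diag_mx d) = diag_mx (\row_i (d 0 i)^*).
Proof.
apply/matrixP => i j; rewrite /hermT !mxE eq_sym.
by case: eqVneq => [->|_]; rewrite ?mulr1n ?mulr0n ?conjC0.
Qed.

Lemma psd_mulmx_hermT n k (X : 'M[C]_(k, n)) (Q : 'M[C]_n) :
  psd Q -> psd (X *m Q *m hermT X).
Proof.
move=> [Q_herm Q_ge0]; split; first by rewrite !hermT_mul hermTK Q_herm mulmxA.
by move=> x; have := Q_ge0 (hermT X *m x); rewrite hermT_mul hermTK !mulmxA.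
Qed.

Lemma psd_diag_ge0 n (A : 'M[C]_n) i : psd A -> 0 <= A i i.
Proof.
move=> [_ A_ge0]; have := A_ge0 (delta_mx i 0).
have -> : hermT (delta_mx i 0) = delta_mx 0 i :> 'rV[C]_n.
  by apply/matrixP => a b; rewrite /hermT !mxE conjC_nat andbC.
by rewrite -rowE -colE !mxE.
Qed.

Lemma psd_gram k n (X : 'M[C]_(k, n)) : psd (hermT X *m X).
Proof.
split; first by rewrite hermT_mul hermTK.
move=> x; rewrite !mulmxA -hermT_mul -mulmxA mxE.
by apply: sumr_ge0 => j _; rewrite /hermT !mxE mulrC mul_conjC_ge0.
Qed.

Lemma psd_diagonalize n (H : 'M[C]_n) : psd H ->
  exists U (d : 'rV[C]_n), [/\ hermT U *m U = 1%:M, U *m hermT U = 1%:M,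
    forall i, 0 <= d 0 i & H = hermT U *m diag_mx d *m U].
Proof.
move=> H_psd; have [H_herm _] := H_psd.
have /orthomx_spectralP H_eq : H \is normalmx.
  by apply/normalmxP; rewrite -map_trmx -/(hermT H) H_herm.
set U := spectralmx H in H_eq; set d := spectral_diag H in H_eq.
have U_unitary : U \is unitarymx := spectral_unitarymx H.
have UUh : U *m hermT U = 1%:M by rewrite /hermT map_trmx; apply/unitarymxP.
have invU : invmx U = hermT U by rewrite invmx_unitary // /hermT map_trmx.
have UhU : hermT U *m U = 1%:M by rewrite -invU mulVmx // spectral_unit.
exists U, d; split; [exact: UhU | exact: UUh | | by rewrite -invU].
move=> i; have := psd_diag_ge0 i (psd_mulmx_hermT U H_psd).
rewrite {1}H_eq invU !mulmxA UUh mul1mx -mulmxA UUh mulmx1.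
by rewrite mxE eqxx mulr1n.
Qed.

Section EigenBasis.
Variables (n : nat) (U : 'M[C]_n).

Definition eigen_mx (d : 'rV[C]_n) := hermT U *m diag_mx d *m U.

Lemma hermT_eigen_mx d : hermT (eigen_mx d) = eigen_mx (\row_i (d 0 i)^*).
Proof. by rewrite /eigen_mx !hermT_mul hermTK hermT_diag mulmxA. Qed.

Hypothesis UUh : U *m hermT U = 1%:M.

Lemma eigen_mxM a b :
  eigen_mx a *m eigen_mx b = eigen_mx (\row_i (a 0 i * b 0 i)).
Proof.
rewrite /eigen_mx -!mulmxA [U *m (hermT U *m _)]mulmxA UUh mul1mx.
by rewrite [diag_mx a *m _]mulmxA mulmx_diag !mulmxA.
Qed.

Hypothesis UhU : hermT U *m U = 1%:M.

Lemma mxtrace_eigen_mxM_le (p : 'rV[C]_n) (Q : 'M[C]_n) :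
  (forall i, 0 <= p 0 i <= 1) -> psd Q -> \tr (eigen_mx p *m Q) <= \tr Q.
Proof.
move=> p01 Q_psd.
have -> : \tr Q = \tr (U *m Q *m hermT U).
  by rewrite mxtrace_mulC mulmxA UhU mul1mx.
rewrite /eigen_mx -!mulmxA mxtrace_mulC -!mulmxA [U *m (Q *m _)]mulmxA.
rewrite mul_diag_mx /mxtrace; apply: ler_sum => i _; rewrite mxE.
have /andP[_ p_le1] := p01 i.
exact: ler_piMl (psd_diag_ge0 i (psd_mulmx_hermT U Q_psd)) p_le1.
Qed.

End EigenBasis.

Lemma exists_dual_cov m n (G : 'M[C]_(m, n)) (Q : 'M[C]_n) : psd Q ->
  exists F : 'M[C]_m, [/\ psd F, \tr F <= \tr Q &
    \det (hermT G *m F *m G + 1%:M) = \det (G *m Q *m hermT G + 1%:M)].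
Proof.
move=> Q_psd; set H := hermT G *m G.
have [U [d [UhU UUh d_ge0 H_eq]]] := psd_diagonalize (psd_gram G : psd H).
pose t := \row_i sqrtC (d 0 i); pose s := \row_i (sqrtC (d 0 i))^-1.
set S := eigen_mx U s; set T := eigen_mx U t.
have HS : H *m S = T.
  rewrite H_eq (eigen_mxM UUh); congr eigen_mx; apply/rowP => i.
  by rewrite !mxE divr_sqrtC.
have SH : S *m H = T.
  rewrite H_eq (eigen_mxM UUh); congr eigen_mx; apply/rowP => i.
  by rewrite !mxE mulrC divr_sqrtC.
have TT : T *m T = H.
  rewrite H_eq (eigen_mxM UUh); congr eigen_mx; apply/rowP => i.
  by rewrite !mxE -expr2 sqrtCK.
have S_herm : hermT S = S.
  rewrite hermT_eigen_mx; congr eigen_mx; apply/rowP => i.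
  by rewrite !mxE geC0_conj // invr_ge0 sqrtC_ge0 d_ge0.
exists (G *m S *m Q *m hermT (G *m S)); split.
- exact: psd_mulmx_hermT.
- (* T S is the orthogonal projection onto the range of H. *)
  rewrite hermT_mul S_herm mxtrace_mulC 2!mulmxA -[S *m _ *m G]mulmxA SH.
  rewrite (eigen_mxM UUh); apply: (mxtrace_eigen_mxM_le UhU _ Q_psd) => i.
  rewrite !mxE; have [->|nz] := eqVneq (sqrtC (d 0 i)) 0.
    by rewrite mul0r lexx ler01.
  by rewrite divff // lexx ler01.
- rewrite hermT_mul S_herm.
  have -> : hermT G *m (G *m S *m Q *m (S *m hermT G)) *m G = T *m (Q *m T).
    by rewrite -{1}HS -SH /H !mulmxA.
  rewrite det_mulmxD1C -[Q *m T *m T]mulmxA TT /H mulmxA.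
  by rewrite det_mulmxD1C mulmxA.
Qed.

Lemma exists_objB_eq_objA m n (P : R) (G : 'M[C]_(m, n)) (Q : 'M[C]_n) :
  covFeas P Q -> exists2 F, covFeas P F & objB G F = objA G Q.
Proof.
move=> [Q_psd trQ]; have [F [F_psd trF detF]] := exists_dual_cov G Q_psd.
exists F; first by split => //; exact: le_trans trQ.
by rewrite /objB /objA /logdet detF.
Qed.

Lemma exists_objA_eq_objB m n (P : R) (G : 'M[C]_(m, n)) (F : 'M[C]_m) :
  covFeas P F -> exists2 Q, covFeas P Q & objA G Q = objB G F.
Proof.
move=> /(exists_objB_eq_objA (hermT G)) [Q Q_feas objQ].
by exists Q; move: objQ; rewrite /objA /objB !hermTK.
Qed.

End ComplexMatrix.

Theorem theorem5 (R : realType) (M N L : nat) (lam W P : R)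
  (gamma : 'I_L -> complex R) (beta theta : 'I_L -> R) :
  (0 < M)%N -> (0 < N)%N -> 0 < lam -> 0 < P -> 0 < W ->
  (forall l, 0 <= beta l <= pi) -> (forall l, 0 <= theta l <= pi) ->
  let G := chanG M lam gamma beta theta in
  forall (Qs : 'M[complex R]_N) (ws : 'I_N -> R)
         (Fx : 'M[complex R]_M) (wx : 'I_N -> R),
  optA W P G Qs ws -> optB W P G Fx wx ->
  [/\ objA (G ws) Qs = objB (G wx) Fx,
      (forall Fs : 'M[complex R]_M, optBw P (G ws) Fs ->
         optB W P G Fs ws /\ objB (G ws) Fs = objB (G wx) Fx)
    & (forall Qx : 'M[complex R]_N, optAw P (G wx) Qx ->
         optA W P G Qx wx /\ objA (G ws) Qs = objA (G wx) Qx)].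
Proof.
move=> _ _ _ _ _ _ _ G Qs ws Fx wx Qs_opt Fx_opt.
have A_le_B w Q : covFeas P Q -> exists2 F, covFeas P F & objA (G w) Q <= objB (G w) F.
  by move=> /(exists_objB_eq_objA (G w)) [F F_feas <-]; exists F.
have B_le_A w F : covFeas P F -> exists2 Q, covFeas P Q & objB (G w) F <= objA (G w) Q.
  by move=> /(exists_objA_eq_objB (G w)) [Q Q_feas <-]; exists Q.
split.
- exact: (maximizes2_eq A_le_B B_le_A Qs_opt Fx_opt).
- by move=> Fs; exact: (maximizes_maximizes2 A_le_B B_le_A Qs_opt Fx_opt).
- move=> Qx /(maximizes_maximizes2 B_le_A A_le_B Fx_opt Qs_opt) [Qx_opt obj_eq].
  by split; [exact: Qx_opt | exact: esym].
Qed.
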